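(* Let $G$ be a connected graph that is not a clique and that has a min-max clique covering satisfying simple intersection, and let $\mathcal{C}(G)$ be its compressed cliques graph. Then \[ |V(G)|-Z_+(G)=|V(\mathcal{C}(G))|-Z_+(\mathcal{C}(G)). \] Moreover, there exist collections of forcing trees for $G$ and for $\mathcal{C}(G)$ that differ only in that the collection for $G$ may contain additional forcing trees that are isolated vertices.
   Context: A clique covering of a graph is a set of cliques such that every edge lies in at least one of them; $\operatorname{cc}(G)$ is its minimum size. A min-max clique covering is a clique covering of size $\operatorname{cc}(G)$ consisting of maximal cliques; it has simple intersection if no three distinct cliques of it share a vertex. Given such a covering $\{C_1,\dots,C_\ell\}$, put $C_{i,j}=C_i\cap C_j$ ($i\ne j$) and $C_{i,i}=C_i\setminus\bigcup_{j\ne i}C_j$; the compressed cliques graph $\mathcal{C}(G)$ has a vertex $v_{i,j}$ for each non-empty $C_{i,j}$ (including $i=j$), with $v_{i,j}\sim v_{i',j'}$ iff $\{i,j\}\cap\{i',j'\}\ne\emptyset$. Positive zero forcing: initially the vertices of a set $B$ are black and all others white. Repeatedly, let $W_1,\dots,W_k$ be the vertex sets of the components of $G$ minus the black vertices; if a black vertex $u$ has exactly one white neighbour $w$ in the subgraph induced by $W_i\cup(\text{black vertices})$, then $u$ may force $w$ (colour it black). $B$ is a positive zero forcing set if eventually all vertices become black; $Z_+(G)$ is the minimum size of such a set. Recording which vertex forces which, the forcing process partitions $V(G)$ into vertex-disjoint induced rooted trees called forcing trees (roots being initially black vertices). *)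

From HB Require Import structures.
From mathcomp Require Import all_boot.
From mathcomp Require Import boolp.

Set Implicit Arguments.
Unset Strict Implicit.
Unset Printing Implicit Defensive.

(* A simple graph: vertex finType V, adjacency e : rel V, assumed symmetric
   and irreflexive in the theorem. *)

Section Graphs.
Variables (V : finType) (e : rel V).

Definition connected_graph : Prop := forall x y : V, connect e x y.

Definition is_complete_graph : Prop := forall x y : V, x != y -> e x y.

Definition is_clique (K : {set V}) : bool :=
  [forall x in K, forall y in K, (x != y) ==> e x y].

Definition is_maximal_clique (K : {set V}) : bool := maxset is_clique K.

Definition clique_covering (l : nat) (C : 'I_l -> {set V}) : Prop :=
  (forall i, is_clique (C i)) /\
  (forall x y, e x y -> exists i, (x \in C i) && (y \in C i)).

Definition min_max_clique_covering (l : nat) (C : 'I_l -> {set V}) : Prop :=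
  [/\ clique_covering C,
      (forall (l' : nat) (C' : 'I_l' -> {set V}), clique_covering C' -> l <= l')
    & (forall i, is_maximal_clique (C i))].

Definition white_rel (S : {set V}) : rel V :=
  [rel a b | [&& e a b, a \notin S & b \notin S]].

Definition forces (S : {set V}) (u w : V) : bool :=
  [&& u \in S, w \notin S, e u w &
      [forall x, [&& x \notin S, e u x & connect (white_rel S) w x] ==> (x == w)]].

Fixpoint valid_forcing (S : {set V}) (s : seq (V * V)) : bool :=
  if s is p :: s' then forces S p.1 p.2 && valid_forcing (p.2 |: S) s'
  else true.

(* (B, s): initial black set B and a chronological list of forces which
   colours every vertex black.  The forcing trees are the rooted trees with
   roots B and edges the pairs of s. *)
Definition complete_forcing (B : {set V}) (s : seq (V * V)) : bool :=
  valid_forcing B s && (B :|: [set x in unzip2 s] == [set: V]).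

Definition pzf_set (B : {set V}) : Prop := exists s, complete_forcing B s.

(* Z_+(G): minimum size of a positive zero forcing set ([set: V] is one,
   so the default value #|V| is harmless) *)
Definition Zplus : nat := \big[minn/#|V|]_(B : {set V} | `[< pzf_set B >]) #|B|.

End Graphs.

Section Compressed.
Variables (V : finType) (l : nat) (C : 'I_l -> {set V}).

Definition simple_intersection : Prop :=
  forall i j k : 'I_l, i != j -> j != k -> i != k -> C i :&: C j :&: C k = set0.

Definition Cij (i j : 'I_l) : {set V} :=
  if i == j then C i :\: \bigcup_(k | k != i) C k else C i :&: C j.

(* vertices v_{i,j} ({i,j} unordered, represented with i <= j) with C_{i,j} <> 0 *)
Definition cvert_pred : pred ('I_l * 'I_l) :=
  fun p => (p.1 <= p.2)%N && (Cij p.1 p.2 != set0).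

Definition cvert : finType := {p : 'I_l * 'I_l | cvert_pred p}.

Definition cadj : rel cvert :=
  fun v w => (v != w) &&
    ([set (val v).1; (val v).2] :&: [set (val w).1; (val w).2] != set0).

End Compressed.

(* Under simple intersection every vertex x of G lies in exactly one part
   C_{i,j}, the one indexed by the set of cliques containing x, and two
   distinct vertices are adjacent iff these index sets meet.  So G arises from
   C(G) by blowing up each vertex v_{i,j} into the clique C_{i,j} of true
   twins.
   For such a blow-up, a positive zero forcing process of C(G) lifts to G:
   one representative of each part plays its vertex and every other vertex
   starts black.  Conversely a process of G projects to C(G) by calling a part
   black once all its vertices are.  Both translations shift the size of the
   initial black set by exactly |V(G)| - |V(C(G))|, so optimal sets correspond,
   and the lifted forcing trees are those of C(G) plus isolated black
   vertices. *)

From mathcomp Require Import all_boot.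
From mathcomp Require Import boolp.
From mathcomp Require Import zify.

Set Implicit Arguments.
Unset Strict Implicit.
Unset Printing Implicit Defensive.

Lemma geq_bigminn (I : eqType) (r : seq I) (P : pred I) (F : I -> nat) x j :
  j \in r -> P j -> \big[minn/x]_(i <- r | P i) F i <= F j.
Proof.
elim: r => [//|a r IHr]; rewrite inE big_cons => /predU1P[<- -> | jr Pj].
  exact: geq_minl.
by case: ifP => _; rewrite ?geq_min IHr ?orbT.
Qed.

Lemma homo_connect (T U : finType) (e : rel T) (f : rel U) (h : T -> U) :
  (forall x y, e x y -> connect f (h x) (h y)) ->
  forall x y, connect e x y -> connect f (h x) (h y).
Proof.
move=> hom x y /connectP[p]; elim: p x => [|z p IHp] x /=; first by move=> _ ->.
by move=> /andP[/hom xz /IHp zy /zy]; apply: connect_trans.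
Qed.

Section GraphFacts.
Variables (V : finType) (e : rel V).

Lemma not_complete_nonedge : ~ is_complete_graph e -> exists x y, x != y /\ ~~ e x y.
Proof.
move=> ncomp; case: (boolP [exists x, exists y, (x != y) && ~~ e x y]).
  by move=> /existsP[x /existsP[y /andP[nxy nexy]]]; exists x, y.
move=> /existsPn none; exfalso; apply: ncomp => x y nxy.
by have /existsPn/(_ y) := none x; rewrite nxy negbK.
Qed.

Lemma connected_neighbour : connected_graph e -> ~ is_complete_graph e ->
  forall x, exists y, e x y.
Proof.
move=> conn /not_complete_nonedge[x0 [y0 [nxy _]]] x.
have [t nxt] : exists2 t, x != t & connect e x t.
  by case: (eqVneq x x0) => [->|]; [exists y0 | exists x0].
case/connectP => [[_ xt|y p /andP[exy _] _]]; last by exists y.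
by rewrite xt eqxx in nxt.
Qed.

End GraphFacts.

Section ZeroForcing.
Variables (V : finType) (e : rel V).

Lemma complete_forcing_nil B : complete_forcing e B [::] = (B == [set: V]).
Proof. by rewrite /complete_forcing /= (_ : [set x in [::]] = set0) ?setU0 //; apply/setP. Qed.

Lemma complete_forcing_cons B u w s :
  complete_forcing e B ((u, w) :: s) = forces e B u w && complete_forcing e (w |: B) s.
Proof.
rewrite /complete_forcing /= -andbA.
have -> : B :|: [set x in w :: unzip2 s] = (w |: B) :|: [set x in unzip2 s].
  by apply/setP=> x; rewrite !inE orbA [(x \in B) || _]orbC.
by [].
Qed.

Lemma pzf_setT : pzf_set e [set: V].
Proof. by exists [::]; rewrite complete_forcing_nil. Qed.

Lemma Zplus_min B : pzf_set e B -> Zplus e <= #|B|.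
Proof. by move=> /asboolP pzfB; apply: geq_bigminn; rewrite ?mem_index_enum. Qed.

Lemma Zplus_le_card : Zplus e <= #|V|.
Proof. by rewrite -cardsT; apply/Zplus_min/pzf_setT. Qed.

Lemma Zplus_attained : exists B, pzf_set e B /\ #|B| = Zplus e.
Proof.
pose attained m := m = #|V| \/ exists B, pzf_set e B /\ #|B| = m.
have [->|//] : attained (Zplus e).
  apply: (big_ind attained); first by left.
    by move=> a b; rewrite /minn; case: ifP.
  by move=> B /asboolP pzfB; right; exists B.
by exists [set: V]; rewrite cardsT; split; first exact: pzf_setT.
Qed.

End ZeroForcing.

Section BlowUp.
Variables (T U : finType) (e : rel T) (f : rel U) (cls : T -> U) (rep : U -> T).
Hypotheses (f_sym : symmetric f) (f_irr : irreflexive f) (repK : cancel rep cls).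
Hypothesis edge_blowup :
  forall x y, e x y = (x != y) && ((cls x == cls y) || f (cls x) (cls y)).
Implicit Types (S : {set T}) (B : {set U}).

Lemma rep_inj : injective rep. Proof. exact: can_inj repK. Qed.

Lemma blowup_sym : symmetric e.
Proof. by move=> x y; rewrite !edge_blowup eq_sym f_sym [cls y == _]eq_sym. Qed.

Lemma edge_same_class x y : cls x = cls y -> x != y -> e x y.
Proof. by move=> xy nxy; rewrite edge_blowup nxy xy eqxx. Qed.

Lemma edge_class x y : e x y -> cls x = cls y \/ f (cls x) (cls y).
Proof. by rewrite edge_blowup => /andP[_ /orP[/eqP|]]; [left | right]. Qed.

Lemma edge_of_class x y : f (cls x) (cls y) -> e x y.
Proof.
move=> fxy; rewrite edge_blowup fxy orbT andbT.
by apply: contraTneq fxy => ->; rewrite f_irr.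
Qed.

Lemma edge_twin u w y : e u w -> cls y = cls w -> y != u -> e u y.
Proof. by rewrite !edge_blowup => /andP[_ uw] -> nyu; rewrite eq_sym nyu uw. Qed.

Lemma blowup_connected : connected_graph e -> connected_graph f.
Proof.
move=> conn v w; rewrite -(repK v) -(repK w); apply: homo_connect (conn _ _).
by move=> x y /edge_class[->|/connect1].
Qed.

Lemma blowup_not_complete : ~ is_complete_graph e -> ~ is_complete_graph f.
Proof.
move=> ncomp fcomp; apply: ncomp => x y nxy.
have [xy|nxy'] := eqVneq (cls x) (cls y); first exact: edge_same_class.
exact/edge_of_class/fcomp.
Qed.

Definition lift (B : {set U}) : {set T} := ~: (rep @: ~: B).

Definition lift_forcing (s : seq (U * U)) : seq (T * T) :=
  [seq (rep q.1, rep q.2) | q <- s].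

Lemma in_lift B x : (x \in lift B) = (x != rep (cls x)) || (cls x \in B).
Proof.
rewrite inE; apply/idP/idP => [|/orP[nx|xB]]; last 2 first.
- by apply: contra nx => /imsetP[v _ ->]; rewrite repK.
- by apply/imsetP => -[v vB xv]; move: xB vB; rewrite xv repK inE => ->.
apply: contraR; rewrite negb_or negbK => /andP[/eqP xE xB].
by apply/imsetP; exists (cls x); rewrite ?inE.
Qed.

Lemma notin_lift B x : (x \notin lift B) = (x == rep (cls x)) && (cls x \notin B).
Proof. by rewrite in_lift negb_or negbK. Qed.

Lemma lift_setT : lift [set: U] = [set: T].
Proof. by apply/setP=> x; rewrite in_lift !inE orbT. Qed.

Lemma lift_setU1 B v : lift (v |: B) = rep v |: lift B.
Proof.
apply/setP=> x; rewrite in_setU1 !in_lift in_setU1.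
case: (eqVneq x (rep v)) => [->|nxv] /=; first by rewrite repK !eqxx.
case: eqVneq => //= xE; case: eqVneq => //= xv.
by rewrite xE xv eqxx in nxv.
Qed.

Lemma card_lift B : #|lift B| + #|U| = #|B| + #|T|.
Proof.
have := cardsC (rep @: ~: B); rewrite card_imset; last exact: rep_inj.
by have := cardsC B; rewrite /lift; lia.
Qed.

Lemma lift_white B x y : x \notin lift B -> y \notin lift B -> e x y ->
  white_rel f B (cls x) (cls y) \/ cls x = cls y.
Proof.
rewrite !notin_lift => /andP[_ xB] /andP[_ yB] /edge_class[|fxy]; first by right.
by left; rewrite /white_rel /= fxy xB yB.
Qed.

Lemma connect_white_lift B x y : connect (white_rel e (lift B)) x y ->
  connect (white_rel f B) (cls x) (cls y).
Proof.
apply: homo_connect => a b /and3P[eab aB bB].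
by case: (lift_white aB bB eab) => [/connect1|->].
Qed.

Lemma forces_lift B v w : forces f B v w -> forces e (lift B) (rep v) (rep w).
Proof.
move=> /and4P[vB wB fvw /forallP unique]; apply/and4P; split.
- by rewrite in_lift repK vB orbT.
- by rewrite notin_lift repK eqxx wB.
- by apply: edge_of_class; rewrite !repK.
apply/forallP=> x; apply/implyP => /and3P[xB ex wx].
have xE : x = rep (cls x) by move: xB; rewrite notin_lift => /andP[/eqP].
have /connect_white_lift := wx; rewrite repK => wcx.
have fvx : f v (cls x).
  move: ex; rewrite edge_blowup repK => /andP[nx /orP[/eqP vx|//]].
  by rewrite xE -vx eqxx in nx.
have := unique (cls x); rewrite fvx wcx andbT.
by move: xB; rewrite notin_lift => /andP[_ -> /eqP <-]; rewrite -xE.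
Qed.

Lemma complete_forcing_lift B s : complete_forcing f B s ->
  complete_forcing e (lift B) (lift_forcing s).
Proof.
elim: s B => [|[v w] s IHs] B.
  by rewrite !complete_forcing_nil => /eqP ->; rewrite lift_setT.
rewrite !complete_forcing_cons => /andP[F cf].
by rewrite forces_lift // -lift_setU1 IHs.
Qed.

Definition collapse (S : {set T}) : {set U} := [set v | cls @^-1: [set v] \subset S].

Lemma collapseP S v : reflect (forall x, cls x = v -> x \in S) (v \in collapse S).
Proof.
rewrite inE; apply: (iffP subsetP) => [sub x xv | sub x]; last by rewrite !inE => /eqP /sub.
by apply: sub; rewrite !inE xv.
Qed.

Lemma cls_notin_collapse S x : x \notin S -> cls x \notin collapse S.
Proof. by apply: contra => /collapseP; apply. Qed.

Lemma collapse_setT : collapse [set: T] = [set: U].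
Proof. by apply/setP=> v; rewrite in_setT; apply/collapseP => x; rewrite in_setT. Qed.

Lemma forces_common_neighbour S u w y : forces e S u w -> e u y -> e w y -> y \in S.
Proof.
move=> /and4P[_ wS _ /forallP/(_ y) uniq_w] uy wy; apply/negPn/negP => yS.
have wcy : connect (white_rel e S) w y by apply: connect1; rewrite /white_rel /= wy wS.
by move: uniq_w; rewrite yS uy wcy => /eqP yw; rewrite yw edge_blowup eqxx in wy.
Qed.

Lemma forces_class_black S u w y : forces e S u w -> cls y = cls w -> y != w -> y \in S.
Proof.
move=> F yw nyw; have /and4P[uS _ uw _] := F.
have [->//|nyu] := eqVneq y u.
apply: (forces_common_neighbour F); first exact: edge_twin uw yw nyu.
by apply: edge_same_class; rewrite ?yw // eq_sym.
Qed.

Lemma collapse_setU1 S u w : forces e S u w -> collapse (w |: S) = cls w |: collapse S.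
Proof.
move=> F; apply/setP => v; rewrite in_setU1.
case: (eqVneq v (cls w)) => [->|nvw] /=.
  apply/collapseP => y yw; rewrite in_setU1.
  by case: (eqVneq y w) => //= nyw; apply: forces_class_black F yw nyw.
apply/collapseP/collapseP => black x xv; have := black x xv; rewrite in_setU1.
  by case/orP => // /eqP xw; rewrite -xv xw eqxx in nvw.
by move=> ->; rewrite orbT.
Qed.

Lemma white_collapse_step S y Z : y \notin S ->
  white_rel f (collapse S) (cls y) Z -> exists2 z, cls z = Z & white_rel e S y z.
Proof.
move=> yS /and3P[fyZ _ ZS].
have /existsP[z /andP[/eqP zZ zS]] : [exists z, (cls z == Z) && (z \notin S)].
  apply: contraR ZS => /existsPn black; apply/collapseP => z zZ.
  by have := black z; rewrite zZ eqxx negbK.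
by exists z; rewrite // /white_rel /= yS zS edge_of_class // zZ.
Qed.

Lemma connect_white_collapse S w X : w \notin S ->
  connect (white_rel f (collapse S)) (cls w) X ->
  exists2 x, cls x = X & (x \notin S) && connect (white_rel e S) w x.
Proof.
move=> wS /connectP[p]; rewrite -[X in path _ X]/(cls w) -[X in last X]/(cls w).
suff walk y : y \notin S -> connect (white_rel e S) w y ->
    path (white_rel f (collapse S)) (cls y) p -> X = last (cls y) p ->
    exists2 x, cls x = X & (x \notin S) && connect (white_rel e S) w x.
  exact: walk.
elim: p y => [|Z p IHp] y yS wy /=; first by move=> _ ->; exists y; rewrite ?yS.
move=> /andP[/(white_collapse_step yS)[z <- yz] Zp] XE.
have /and3P[_ _ zS] := yz.
by apply: (IHp z) => //; apply: connect_trans wy (connect1 yz).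
Qed.

Lemma connect_white_isolated S w x : (forall z, e w z -> z \in S) ->
  connect (white_rel e S) w x -> x = w.
Proof.
move=> black /connectP[[_ -> //|z p /andP[/and3P[wz _ zS] _] _]].
by rewrite black in zS.
Qed.

Section Collapse.
Hypothesis f_nb : forall v, exists w, f v w.

Definition nb v : U := xchoose (f_nb v).

Lemma nbP v : f v (nb v). Proof. exact: xchooseP. Qed.

(** When [u] forces [w] inside its own class, every neighbour of [w] is black,
    so [cls w] may be forced by any of its neighbours in the quotient. *)
Definition collapse_force (p : T * T) : U * U :=
  (if cls p.1 == cls p.2 then nb (cls p.2) else cls p.1, cls p.2).

Lemma forces_collapse_same S u w : forces e S u w -> cls u = cls w ->
  forces f (collapse S) (nb (cls w)) (cls w).
Proof.
move=> F uw; have /and4P[uS wS _ _] := F.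
have black z : e w z -> z \in S.
  move=> wz; have [->//|nzu] := eqVneq z u.
  have zu : e z u by apply: (edge_twin (w := w)); rewrite 1?blowup_sym // eq_sym.
  by apply: (forces_common_neighbour F) wz; rewrite blowup_sym.
apply/and4P; split.
- by apply/collapseP => y yn; apply/black/edge_of_class; rewrite yn nbP.
- exact: cls_notin_collapse.
- by rewrite f_sym nbP.
apply/forallP => X; apply/implyP => /and3P[_ _ wX].
have [x <- /andP[_ wx]] := connect_white_collapse wS wX.
by rewrite (connect_white_isolated black wx).
Qed.

Lemma forces_collapse_other S u w : forces e S u w -> cls u != cls w ->
  forces f (collapse S) (cls u) (cls w).
Proof.
move=> F nuw; have /and4P[uS wS uw /forallP uniq_w] := F.
apply/and4P; split.
- apply/collapseP => y yu; have [->//|nyu] := eqVneq y u.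
  have nyw : y != w by apply: contraNneq nuw => yw; rewrite -yu yw.
  have wy : e w y by rewrite blowup_sym in uw; apply: edge_twin uw yu nyw.
  by apply: (forces_common_neighbour F) wy; apply: edge_same_class; rewrite // eq_sym.
- exact: cls_notin_collapse.
- by case: (edge_class uw) => // uw'; rewrite uw' eqxx in nuw.
apply/forallP => X; apply/implyP => /and3P[_ uX wX].
have [x xX /andP[xS wx]] := connect_white_collapse wS wX.
have ux : e u x by apply: edge_of_class; rewrite xX.
by have := uniq_w x; rewrite xS ux wx -xX => /eqP ->.
Qed.

Lemma forces_collapse S u w : forces e S u w ->
  forces f (collapse S) (collapse_force (u, w)).1 (collapse_force (u, w)).2.
Proof.
rewrite /collapse_force /=; case: eqVneq => [uw|nuw] F; last exact: forces_collapse_other.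
exact: forces_collapse_same F uw.
Qed.

Lemma complete_forcing_collapse S s : complete_forcing e S s ->
  complete_forcing f (collapse S) (map collapse_force s).
Proof.
elim: s S => [|[u w] s IHs] S.
  by rewrite !complete_forcing_nil => /eqP ->; rewrite collapse_setT.
rewrite /= [collapse_force _]surjective_pairing complete_forcing_cons.
rewrite complete_forcing_cons => /andP[F cf].
by rewrite forces_collapse //= -(collapse_setU1 F) IHs.
Qed.

Lemma card_collapse S s : complete_forcing e S s ->
  #|S| + #|U| = #|collapse S| + #|T|.
Proof.
elim: s S => [|[u w] s IHs] S.
  by rewrite complete_forcing_nil => /eqP ->; rewrite collapse_setT !cardsT addnC.
rewrite complete_forcing_cons => /andP[F /IHs].
have /and4P[_ wS _ _] := F.
rewrite (collapse_setU1 F) !cardsU1 wS (cls_notin_collapse wS); lia.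
Qed.

Theorem Zplus_blowup : Zplus e + #|U| = Zplus f + #|T|.
Proof.
have [BU [[sU cfU] BUmin]] := Zplus_attained f.
have [BT [[sT cfT] BTmin]] := Zplus_attained e.
have up : Zplus e <= #|lift BU|.
  by apply: Zplus_min; exists (lift_forcing sU); apply: complete_forcing_lift.
have down : Zplus f <= #|collapse BT|.
  by apply: Zplus_min; exists (map collapse_force sT); apply: complete_forcing_collapse.
by have := card_lift BU; have := card_collapse cfT; lia.
Qed.

Lemma card_lift_Zplus B : #|B| = Zplus f -> #|lift B| = Zplus e.
Proof. by have := card_lift B; have := Zplus_blowup; lia. Qed.

End Collapse.

Lemma imset_rep_sub_lift B : rep @: B \subset lift B.
Proof. by apply/subsetP => x /imsetP[v vB ->]; rewrite in_lift repK vB orbT. Qed.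

Lemma notin_codom_lift B x : x \in lift B -> x \notin rep @: B -> x \notin codom rep.
Proof.
move=> xB; apply: contra => /codomP[v xv]; apply/imsetP; exists v => //.
by move: xB; rewrite in_lift xv repK eqxx.
Qed.

End BlowUp.

Section CompressedCliques.
Variables (T : finType) (e : rel T) (l : nat) (C : 'I_l -> {set T}).

Definition cliques_of (x : T) : {set 'I_l} := [set k | x \in C k].
Definition cindex (v : cvert C) : {set 'I_l} := [set (val v).1; (val v).2].
Definition cpart (v : cvert C) : {set T} := Cij C (val v).1 (val v).2.

Lemma cadj_irr : irreflexive (cadj (C := C)).
Proof. by move=> v; rewrite /cadj eqxx. Qed.

Lemma cadj_sym : symmetric (cadj (C := C)).
Proof. by move=> v w; rewrite /cadj eq_sym setIC. Qed.

Lemma cindex_inj : injective cindex.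
Proof.
move=> [[a b] vab] [[c d] vcd] /setP; rewrite /cindex /= => E.
have /andP[/= ab _] := vab; have /andP[/= cd _] := vcd.
have := E a; have := E b; have := E c; have := E d.
rewrite !inE !eqxx ?orbT -!(inj_eq (@ord_inj l)).
move=> /orP[]/eqP ? /orP[]/eqP ? /esym/orP[]/eqP ? /esym/orP[]/eqP ?;
  apply: val_inj; congr pair; apply: ord_inj; lia.
Qed.

Lemma cpart_neq0 v : exists x, x \in cpart v.
Proof. by have /andP[_ /set0Pn] := valP v. Qed.

Hypothesis simpC : simple_intersection C.

Lemma cliques_of_Cij i j x : x \in Cij C i j -> cliques_of x = [set i; j].
Proof.
rewrite /Cij; case: eqVneq => [<-|nij].
  rewrite setUid !inE => /andP[xnot xi]; apply/setP=> k; rewrite !inE.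
  case: eqVneq => [->//|nki]; apply: contraNF xnot => xk.
  by apply/bigcupP; exists k.
rewrite inE => /andP[xi xj]; apply/setP=> k; rewrite !inE.
case: eqVneq => [->//|nki]; case: eqVneq => [->//|nkj] /=.
apply/negP=> xk; have : x \in C i :&: C j :&: C k by rewrite !inE xi xj xk.
by rewrite simpC ?inE // eq_sym.
Qed.

Lemma cpart_uniq v w x : x \in cpart v -> x \in cpart w -> v = w.
Proof.
by move=> /cliques_of_Cij xv /cliques_of_Cij xw; apply: cindex_inj; rewrite /cindex -xv -xw.
Qed.

Hypotheses (e_irr : irreflexive e) (covC : clique_covering e C).

Lemma edge_cliques x y : e x y = (x != y) && (cliques_of x :&: cliques_of y != set0).
Proof.
apply/idP/andP => [xy|[nxy /set0Pn[k]]]; last first.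
  rewrite !inE => /andP[xk yk].
  by have /forall_inP/(_ x xk)/forall_inP/(_ y yk)/implyP := covC.1 k; apply.
split; first by apply: contraTneq xy => ->; rewrite e_irr.
by have [i /andP[xi yi]] := covC.2 _ _ xy; apply/set0Pn; exists i; rewrite !inE xi yi.
Qed.

Lemma cpart_cover x y : e x y -> exists v, x \in cpart v.
Proof.
move=> xy; have [i /andP[xi _]] := covC.2 _ _ xy.
have part (k k' : 'I_l) : k <= k' -> x \in Cij C k k' -> exists v, x \in cpart v.
  move=> kk' xkk'; have vP : cvert_pred C (k, k').
    by rewrite /cvert_pred /= kk'; apply/set0Pn; exists x.
  by exists (exist _ (k, k') vP).
case: (boolP [exists j, (j != i) && (x \in C j)]).
  move=> /existsP[j /andP[nji xj]].
  have xij k k' : k != k' -> x \in C k -> x \in C k' -> x \in Cij C k k'.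
    by move=> nkk' xk xk'; rewrite /Cij (negbTE nkk') inE xk xk'.
  case: (leqP i j) => ij; first by apply: (part i j ij); rewrite xij // eq_sym.
  by apply: (part j i (ltnW ij)); rewrite xij.
move=> /existsPn only_i; apply: (part i i (leqnn i)).
rewrite /Cij eqxx !inE xi andbT.
by apply/bigcupP => -[k nki xk]; have := only_i k; rewrite nki xk.
Qed.

Section Classes.
Hypothesis part_total : forall x, exists v, x \in cpart v.

Definition part_of (x : T) : cvert C := xchoose (part_total x).
Definition part_rep (v : cvert C) : T := xchoose (cpart_neq0 v).

Lemma cpartE x v : (x \in cpart v) = (part_of x == v).
Proof.
apply/idP/eqP => [xv|<-]; last exact: (xchooseP (part_total x)).
exact: cpart_uniq (xchooseP (part_total x)) xv.
Qed.

Lemma part_repP v : part_rep v \in cpart v.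
Proof. exact: xchooseP. Qed.

Lemma part_repK : cancel part_rep part_of.
Proof. by move=> v; apply/eqP; rewrite -cpartE part_repP. Qed.

Lemma cliques_of_part x : cliques_of x = cindex (part_of x).
Proof. by apply: cliques_of_Cij; rewrite cpartE. Qed.

Lemma edge_compressed x y :
  e x y = (x != y) && ((part_of x == part_of y) || cadj (part_of x) (part_of y)).
Proof.
rewrite edge_cliques !cliques_of_part /cadj -/(cindex _) -/(cindex _).
congr (_ && _); case: (eqVneq (part_of x) (part_of y)) => [->|//].
by rewrite setIid; apply/set0Pn; exists (val (part_of y)).1; rewrite !inE eqxx.
Qed.

End Classes.
End CompressedCliques.

Theorem mainTheorem5 (T : finType) (e : rel T) (l : nat) (C : 'I_l -> {set T}) :
  symmetric e -> irreflexive e ->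
  connected_graph e -> ~ is_complete_graph e ->
  min_max_clique_covering e C -> simple_intersection C ->
  #|T| - Zplus e = #|cvert C| - Zplus (cadj (C := C))
  /\
  exists (phi : cvert C -> T) (BG : {set T}) (sG : seq (T * T))
         (BC : {set cvert C}) (sC : seq (cvert C * cvert C)),
    [/\ (forall v : cvert C, phi v \in Cij C (val v).1 (val v).2),
        complete_forcing e BG sG /\ #|BG| = Zplus e,
        complete_forcing (cadj (C := C)) BC sC /\ #|BC| = Zplus (cadj (C := C)),
        phi @: BC \subset BG /\
        (forall p, (p \in sG) = (p \in [seq (phi q.1, phi q.2) | q <- sC]))
      & forall x, x \in BG -> x \notin phi @: BC ->
          forall p, p \in sG -> (p.1 != x) && (p.2 != x)].
Proof.
move=> _ e_irr conn ncomp [covC _ _] simpC.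
have e_nb := connected_neighbour conn ncomp.
have part_total x : exists v : cvert C, x \in cpart v.
  by have [y xy] := e_nb x; apply: cpart_cover xy.
have repK := part_repK simpC part_total.
have edgeE := edge_compressed simpC e_irr covC part_total.
have f_sym := @cadj_sym _ _ C; have f_irr := @cadj_irr _ _ C.
have f_nb := connected_neighbour (blowup_connected repK edgeE conn)
  (blowup_not_complete f_irr edgeE ncomp).
have ZE := Zplus_blowup f_sym f_irr repK edgeE f_nb.
split; first by have := Zplus_le_card e; have := Zplus_le_card (cadj (C := C)); lia.
have [BC [[sC cfC] BCmin]] := Zplus_attained (cadj (C := C)).
exists (part_rep (C := C)), (lift (part_rep (C := C)) BC),
  (lift_forcing (part_rep (C := C)) sC), BC, sC; split => //.
- exact: part_repP.
- split; first exact: complete_forcing_lift f_irr repK edgeE _ _ cfC.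
  exact: card_lift_Zplus f_sym f_irr repK edgeE f_nb _ BCmin.
- by split; first exact: imset_rep_sub_lift repK BC.
move=> x xB xnB p /mapP[q _ ->] /=; have xnc := notin_codom_lift repK xB xnB.
by apply/andP; split; apply: contraNneq xnc => <-; apply: codom_f.
Qed.
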